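(* Let $d\ge 2$, let $\varphi=\sum_{\bm{k}\in\mathbb{Z}^d}\varphi_{\bm{k}}z^{\bm{k}}\in L^\infty(\mathbb{T}^d)$, and let $C$ be a conjugation on $H^2(\mathbb{D}^d)$ with canonical factorization $C=UJ_{H^2(\mathbb{D}^d)}$ ($U$ unitary). For $\bm{k}\in\mathbb{Z}_+^d$ put $\tilde z^{\bm{k}}:=Cz^{\bm{k}}=Uz^{\bm{k}}$. The following are equivalent: (1) $T_\varphi$ is $C$-symmetric; (2) $\varphi_{\bm{k}-\bm{l}}=\langle T_\varphi\tilde z^{\bm{k}},\tilde z^{\bm{l}}\rangle$ for all $\bm{k},\bm{l}\in\mathbb{Z}_+^d$; (3) $\varphi_{\bm{k}-\bm{l}}=\langle U^*T_\varphi Uz^{\bm{k}},z^{\bm{l}}\rangle$ for all $\bm{k},\bm{l}\in\mathbb{Z}_+^d$.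
   Context: A conjugation is an anti-linear, involutive ($C^2=I$), isometric map on a Hilbert space; $T$ is $C$-symmetric if $CT^*C=T$. $H^2(\mathbb{D}^d)$ is the Hardy space over the unit polydisc $\mathbb{D}^d$, identified with the closed subspace of $L^2(\mathbb{T}^d)$ spanned by the monomials $z^{\bm{k}}=z_1^{k_1}\cdots z_d^{k_d}$, $\bm{k}\in\mathbb{Z}_+^d$, which form its canonical orthonormal basis; inner products are linear in the first entry. For $\varphi\in L^\infty(\mathbb{T}^d)$, $T_\varphi f=P_{H^2(\mathbb{D}^d)}(\varphi f)$. The canonical conjugation is $J_{H^2(\mathbb{D}^d)}(\sum_{\bm{k}}a_{\bm{k}}z^{\bm{k}})=\sum_{\bm{k}}\bar a_{\bm{k}}z^{\bm{k}}$, and the canonical factorization of a conjugation $C$ is the unique factorization $C=UJ_{H^2(\mathbb{D}^d)}$ with $U$ unitary. (In the paper, condition (2) is written as $\varphi_{\bm{k}-\bm{l}}=\tilde\varphi_{\bm{l}-\bm{k}}$ with the notation $\tilde\varphi_{\bm{l}-\bm{k}}:=\langle T_\varphi\tilde z^{\bm{k}},\tilde z^{\bm{l}}\rangle$.) *)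

From mathcomp Require Import all_boot all_order all_algebra.
From mathcomp Require Import all_classical all_reals.
From mathcomp Require Import complex.

Set Implicit Arguments.
Unset Strict Implicit.
Unset Printing Implicit Defensive.
Import Order.TTheory GRing.Theory Num.Theory.
Local Open Scope ring_scope.

Section HardyDefs.
Variable R : realType.
Local Notation C := (R[i]).

Section Sums.
Variable I : choiceType.

Definition has_sum (F : I -> C) (s : C) : Prop :=
  forall e : R, 0 < e -> exists F0 : seq I, forall S : seq I,
    uniq S -> {subset F0 <= S} -> `| \sum_(i <- S) F i - s | < (e%:C)%C.

(* the value of the sum (0 if the family is not summable) *)
Definition sumv (F : I -> C) : C := xget 0 [set s | has_sum F s].

Definition l2 (f : I -> C) : Prop := exists s, has_sum (fun k => f k * (f k)^*) s.

Definition ip (f g : I -> C) : C := sumv (fun k => f k * (g k)^*).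

Definition lc (a : C) (f g : I -> C) : I -> C := fun k => a * f k + g k.
End Sums.

Definition mind (d : nat) := {ffun 'I_d -> nat}.
Definition zind (d : nat) := {ffun 'I_d -> int}.

Definition mdiff d (k l : mind d) : zind d := [ffun i => (k i)%:Z - (l i)%:Z].
Definition zdiff d (m n : zind d) : zind d := [ffun i => m i - n i].

(* H^2(D^d), identified (via the canonical orthonormal basis z^k) with
   l^2(Z_+^d): an element f is its family of Taylor coefficients. *)
Definition Hfun d := mind d -> C.
Definition H2 d (f : Hfun d) : Prop := l2 f.

Definition mono d (k : mind d) : Hfun d := fun m => (m == k)%:R.

Definition Jcan d (f : Hfun d) : Hfun d := fun k => (f k)^*.

(* Fourier coefficients of phi * f, for f in L^2(T^d) (coefficients in l^2(Z^d)) *)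
Definition laurent d (phi : zind d -> C) (f : zind d -> C) : zind d -> C :=
  fun m => sumv (fun n => phi (zdiff m n) * f n).

(* phi = (phi_k)_{k in Z^d} is the Fourier coefficient family of a function in
   L^oo(T^d): multiplication by phi is a bounded operator on L^2(T^d) = l^2(Z^d). *)
Definition Linf_coeffs d (phi : zind d -> C) : Prop :=
  exists M : R, forall f : zind d -> C, l2 f ->
    l2 (laurent phi f) /\ ip (laurent phi f) (laurent phi f) <= (M%:C)%C * ip f f.

(* Toeplitz operator T_phi f = P_{H^2}(phi f):
   (T_phi f)_l = sum_{k in Z_+^d} phi_{l-k} f_k *)
Definition toeplitz d (phi : zind d -> C) (f : Hfun d) : Hfun d :=
  fun l => sumv (fun k => phi (mdiff l k) * f k).

Definition maps_H2 d (T : Hfun d -> Hfun d) : Prop := forall f, H2 f -> H2 (T f).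

Definition linear_H2 d (T : Hfun d -> Hfun d) : Prop :=
  forall a f g, H2 f -> H2 g -> T (lc a f g) = lc a (T f) (T g).

Definition antilinear_H2 d (T : Hfun d -> Hfun d) : Prop :=
  forall a f g, H2 f -> H2 g -> T (lc a f g) = lc a^* (T f) (T g).

Definition conjugation d (Cj : Hfun d -> Hfun d) : Prop :=
  [/\ maps_H2 Cj, antilinear_H2 Cj,
      (forall f, H2 f -> Cj (Cj f) = f)
    & (forall f, H2 f -> ip (Cj f) (Cj f) = ip f f)].

Definition unitary d (U : Hfun d -> Hfun d) : Prop :=
  [/\ maps_H2 U, linear_H2 U,
      (forall f g, H2 f -> H2 g -> ip (U f) (U g) = ip f g)
    & (forall g, H2 g -> exists2 f, H2 f & U f = g)].

Definition is_adjoint d (T S : Hfun d -> Hfun d) : Prop :=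
  maps_H2 S /\ forall f g, H2 f -> H2 g -> ip (T f) g = ip f (S g).

Definition C_symmetric d (Cj T : Hfun d -> Hfun d) : Prop :=
  exists2 S, is_adjoint T S & forall f, H2 f -> Cj (S (Cj f)) = T f.

End HardyDefs.

From mathcomp Require Import all_boot all_order all_algebra.
From mathcomp Require Import all_classical all_reals.
From mathcomp Require Import complex.
From mathcomp Require Import ring lra.
Import Order.TTheory GRing.Theory Num.Theory.
Local Open Scope ring_scope.

(* Write T = T_phi and z~^k = C z^k = U z^k (J fixes the monomials); C is
   antiunitary, <C f, C g> = <g, f>.
   (1) -> (2): if C T^* C = T then
   <T z~^k, z~^l> = <C T^* z^k, C z^l> = <z^l, T^* z^k> = <T z^l, z^k> = phi_(k-l).
   (2) -> (1): (2) says that <T f, g> = <f, C T C g> whenever g is a monomial.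
   Both sides are conjugate-linear in g and bounded, T being bounded because it
   is the compression of multiplication by phi in L^oo; so the identity extends
   to all of H^2 and C T C is the adjoint of T, whence C T^* C = C C T C C = T.
   (2) <-> (3): <T U z^k, U z^l> = <U^* T U z^k, z^l>. *)

Set Implicit Arguments.
Unset Strict Implicit.
Unset Printing Implicit Defensive.

Local Notation normc := Normc.normc.
Local Notation "x %:C" := (real_complex _ x) (format "x %:C").

Lemma ler_AMGM (R : realFieldType) (a b t : R) :
  0 < t -> a * b <= (t * a ^+ 2 + b ^+ 2 / t) / 2.
Proof.
move=> t_gt0; rewrite ler_pdivlMr ?ltr0n // -subr_ge0.
have -> : t * a ^+ 2 + b ^+ 2 / t - a * b * 2 = (t * a - b) ^+ 2 / t.
  by field; rewrite gt_eqF.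
by rewrite divr_ge0 ?sqr_ge0 ?ltW.
Qed.

Lemma sqr_le_of_AMGM (R : realFieldType) (x A B : R) : 0 <= x -> 0 <= A -> 0 <= B ->
  (forall t, 0 < t -> x <= (t * A + B / t) / 2) -> x ^+ 2 <= A * B.
Proof.
rewrite le_eqVlt => /predU1P [<- A_ge0 B_ge0 _ | x_gt0 A_ge0 B_ge0 hAMGM].
  by rewrite expr0n mulr_ge0.
have poly t : 0 < t -> 2 * x * t <= t ^+ 2 * A + B.
  move=> t_gt0; have := hAMGM t t_gt0; rewrite ler_pdivlMr ?ltr0n // => h.
  have -> : t ^+ 2 * A + B = (t * A + B / t) * t by field; rewrite gt_eqF.
  by rewrite [2 * x]mulrC; apply: ler_wpM2r => //; apply: ltW.
have [A_gt0 | ] := ltP 0 A.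
  have At : A * (x / A) = x by rewrite mulrC divfK ?gt_eqF.
  have := poly _ (divr_gt0 x_gt0 A_gt0); nra.
rewrite le_eqVlt ltNge A_ge0 orbF => /eqP A0; subst A.
have xt : x * ((B + 1) / x) = B + 1 by rewrite mulrC divfK ?gt_eqF.
have := poly _ (divr_gt0 (ltr_wpDl B_ge0 ltr01) x_gt0); nra.
Qed.

Section NormC.
Variable R : realType.
Implicit Types x y : R[i].

Lemma normcE x : `|x| = (normc x)%:C.
Proof. by case: x. Qed.

Lemma normc_ge0 x : 0 <= normc x.
Proof. by rewrite -(lecR 0) -normcE normr_ge0. Qed.

Lemma normc_conj x : normc x^* = normc x.
Proof. by apply: complexI; rewrite -!normcE normcJ. Qed.

Lemma normc_real (a : R) : normc a%:C = `|a|.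
Proof. by rewrite /= expr0n /= addr0 sqrtr_sqr. Qed.

Lemma mul_conj_normc x : x * x^* = (normc x ^+ 2)%:C.
Proof. by rewrite -sqr_normc (normcE x) rmorphXn. Qed.

Lemma normc_Re x : `|complex.Re x| <= normc x.
Proof. by case: x => a b; rewrite /= -sqrtr_sqr ler_wsqrtr // lerDl sqr_ge0. Qed.

Lemma normc_Im x : `|complex.Im x| <= normc x.
Proof. by case: x => a b; rewrite /= -sqrtr_sqr ler_wsqrtr // lerDr sqr_ge0. Qed.

Lemma ltc_normc x (e : R) : (`|x| < e%:C) = (normc x < e).
Proof. by rewrite normcE ltcR. Qed.

Lemma normc_sum (I : Type) (s : seq I) (F : I -> R[i]) :
  normc (\sum_(i <- s) F i) <= \sum_(i <- s) normc (F i).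
Proof.
elim: s => [|a s IHs]; first by rewrite !big_nil Normc.normc0.
by rewrite !big_cons; apply: le_trans (le_normcD _ _) _; rewrite lerD2l.
Qed.

Lemma normc_small_eq0 x : (forall e : R, 0 < e -> normc x < e) -> x = 0.
Proof.
move=> small; apply: Normc.eq0_normc; apply/eqP; rewrite eq_le normc_ge0 andbT.
by apply/ler_addgt0Pr => e /small /ltW; rewrite add0r.
Qed.

End NormC.

Lemma big_uniq_sub (R : Type) (idx : R) (op : Monoid.com_law idx) (T : eqType)
    (A B : seq T) (F : T -> R) :
  uniq A -> uniq B -> {subset A <= B} ->
  \big[op/idx]_(i <- B | i \in A) F i = \big[op/idx]_(i <- A) F i.
Proof.
move=> uA uB AB; rewrite -big_filter; apply/perm_big/uniq_perm => //.
  exact: filter_uniq.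
by move=> x; rewrite mem_filter andb_idr // => /AB.
Qed.

Lemma ler_sum_uniq_sub (R : numDomainType) (T : eqType) (A B : seq T)
    (F : T -> R) :
  (forall i, 0 <= F i) -> uniq A -> uniq B -> {subset A <= B} ->
  \sum_(i <- A) F i <= \sum_(i <- B) F i.
Proof.
move=> F_ge0 uA uB AB; rewrite [leRHS](bigID (mem A)) /= big_uniq_sub //.
by rewrite lerDl sumr_ge0.
Qed.

Section HasSum.
Variables (R : realType) (I : choiceType).
Implicit Types (F G : I -> R[i]) (S : seq I).

Lemma has_sumP F s : has_sum F s <-> forall e : R, 0 < e -> exists F0 : seq I,
  forall S, uniq S -> {subset F0 <= S} -> normc (\sum_(i <- S) F i - s) < e.
Proof.
split=> sF e /sF [F0 HF]; exists F0 => S uS F0S.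
  by rewrite -ltc_normc HF.
by rewrite ltc_normc HF.
Qed.

Lemma eq_has_sum F G s : F =1 G -> has_sum F s -> has_sum G s.
Proof. by move=> /funext ->. Qed.

Lemma has_sum_unique F s1 s2 : has_sum F s1 -> has_sum F s2 -> s1 = s2.
Proof.
move=> /has_sumP sF1 /has_sumP sF2; apply/eqP; rewrite -subr_eq0; apply/eqP.
apply: normc_small_eq0 => e e_gt0.
have [F1 HF1] := sF1 _ (divr_gt0 e_gt0 (ltr0n _ 2)).
have [F2 HF2] := sF2 _ (divr_gt0 e_gt0 (ltr0n _ 2)).
pose S := undup (F1 ++ F2).
have F1S : {subset F1 <= S} by move=> x hx; rewrite mem_undup mem_cat hx.
have F2S : {subset F2 <= S} by move=> x hx; rewrite mem_undup mem_cat hx orbT.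
have := ltrD (HF1 S (undup_uniq _) F1S) (HF2 S (undup_uniq _) F2S).
rewrite -splitr; apply: le_lt_trans; set x := \sum_(i <- S) F i.
have -> : s1 - s2 = - (x - s1) + (x - s2) by ring.
by apply: le_trans (le_normcD _ _) _; rewrite normcN.
Qed.

Lemma sumvE F s : has_sum F s -> sumv F = s.
Proof.
move=> sF; apply: (has_sum_unique _ sF).
exact: (@xgetPex _ 0 [set s | has_sum F s] (ex_intro _ s sF)).
Qed.

Lemma has_sum_conj F s : has_sum F s -> has_sum (fun i => (F i)^*) s^*.
Proof.
move=> /has_sumP sF; apply/has_sumP => e /sF [F0 HF]; exists F0 => S uS F0S.
by rewrite -rmorph_sum -rmorphB normc_conj HF.
Qed.

Lemma sumv_conj F : sumv (fun i => (F i)^*) = (sumv F)^*.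
Proof.
have [[s sF]|nsF] := pselect (exists s, has_sum F s).
  by rewrite (sumvE sF) (sumvE (has_sum_conj sF)).
have sumv0 G : ~ (exists s, has_sum G s) -> sumv G = 0.
  by move=> nsG; rewrite /sumv xgetPN // => s sG; apply: nsG; exists s.
rewrite !sumv0 ?conjC0 // => -[s sF]; apply: nsF.
by exists s^*; apply: eq_has_sum (has_sum_conj sF) => i; rewrite conjCK.
Qed.

Lemma has_sum_finsupp F S0 : uniq S0 -> (forall i, i \notin S0 -> F i = 0) ->
  has_sum F (\sum_(i <- S0) F i).
Proof.
move=> uS0 F0; apply/has_sumP => e e_gt0; exists S0 => S uS S0S.
rewrite (bigID (mem S0)) /= big_uniq_sub // [X in _ + X - _]big1 => [|i /F0 //].
by rewrite addr0 subrr Normc.normc0.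
Qed.

Lemma sumv_single F k : (forall i, i != k -> F i = 0) -> sumv F = F k.
Proof.
move=> Fk; rewrite (@sumvE _ _ (has_sum_finsupp (S0 := [:: k]) _ _)) ?big_seq1 //.
by move=> i; rewrite inE => /Fk.
Qed.

Lemma has_sumD F G s t : has_sum F s -> has_sum G t ->
  has_sum (fun i => F i + G i) (s + t).
Proof.
move=> /has_sumP sF /has_sumP sG; apply/has_sumP => e e_gt0.
have [F1 HF1] := sF _ (divr_gt0 e_gt0 (ltr0n _ 2)).
have [F2 HF2] := sG _ (divr_gt0 e_gt0 (ltr0n _ 2)).
exists (F1 ++ F2) => S uS F12S.
have F1S : {subset F1 <= S} by move=> x hx; rewrite F12S // mem_cat hx.
have F2S : {subset F2 <= S} by move=> x hx; rewrite F12S // mem_cat hx orbT.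
have := ltrD (HF1 S uS F1S) (HF2 S uS F2S).
rewrite -splitr; apply: le_lt_trans; rewrite big_split /=.
by apply: le_trans (le_normcD _ _); rewrite addrACA opprD.
Qed.

Lemma has_sumMl F s a : has_sum F s -> has_sum (fun i => a * F i) (a * s).
Proof.
move=> /has_sumP sF; apply/has_sumP => e e_gt0.
have a1_gt0 : 0 < normc a + 1 by rewrite ltr_wpDl ?normc_ge0.
have [F0 HF0] := sF _ (divr_gt0 e_gt0 a1_gt0); exists F0 => S uS F0S.
rewrite -mulr_sumr -mulrBr Normc.normcM.
apply: (@le_lt_trans _ _ (normc a * (e / (normc a + 1)))).
  by rewrite ler_wpM2l ?normc_ge0 // ltW // HF0.
by rewrite mulrA ltr_pdivrMr // mulrC ltr_pM2l // ltrDl.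
Qed.

Lemma has_sum_lc F G s t a : has_sum F s -> has_sum G t ->
  has_sum (lc a F G) (a * s + t).
Proof. by move=> sF sG; apply/has_sumD/sG/has_sumMl. Qed.

Lemma has_sum_ge0_bounded (p : I -> R) (B : R) : (forall i, 0 <= p i) ->
  (forall S, uniq S -> \sum_(i <- S) p i <= B) ->
  exists2 s : R, has_sum (fun i => (p i)%:C) s%:C & s <= B.
Proof.
move=> p_ge0 pB.
pose E := [set x : R | exists2 S, uniq S & x = \sum_(i <- S) p i]%classic.
have supE : has_sup E.
  by split; [exists 0, [::]; rewrite ?big_nil | exists B => _ [S uS ->]; apply: pB].
exists (sup E); last by apply: ge_sup => [|_ [S uS ->]]; [case: supE | apply: pB].
apply/has_sumP => e e_gt0.
have [_ [S0 uS0 ->] S0e] := sup_adherent e_gt0 supE.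
exists S0 => S uS S0S.
have S0S_le : \sum_(i <- S0) p i <= \sum_(i <- S) p i by apply: ler_sum_uniq_sub.
have S_sup : \sum_(i <- S) p i <= sup E by apply: sup_upper_bound => //; exists S.
rewrite -rmorph_sum -rmorphB normc_real ler0_norm ?subr_le0 //.
by rewrite opprB ltrBlDr -ltrBlDl (lt_le_trans S0e).
Qed.

Lemma has_sum_ge0_le (p : I -> R) s : (forall i, 0 <= p i) ->
  has_sum (fun i => (p i)%:C) s ->
  s = (complex.Re s)%:C /\ forall S, uniq S -> \sum_(i <- S) p i <= complex.Re s.
Proof.
move=> p_ge0 ps.
have ple S : uniq S -> \sum_(i <- S) p i <= complex.Re s.
  move=> uS; apply/ler_addgt0Pr => e e_gt0.
  have [F0 HF0] := (has_sumP _ _).1 ps e e_gt0.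
  pose S' := undup (S ++ F0).
  have F0S' : {subset F0 <= S'} by move=> x hx; rewrite mem_undup mem_cat hx orbT.
  have SS' : \sum_(i <- S) p i <= \sum_(i <- S') p i.
    by apply: ler_sum_uniq_sub => // [|x hx]; rewrite ?undup_uniq ?mem_undup ?mem_cat ?hx.
  apply: (le_trans SS').
  have := le_lt_trans (normc_Re _) (HF0 S' (undup_uniq _) F0S').
  by rewrite -rmorph_sum raddfB /= => /ltr_normlP [_]; rewrite ltrBlDl => /ltW.
have [s' ps' _] := has_sum_ge0_bounded p_ge0 ple.
by move: (has_sum_unique ps ps') ple => ->.
Qed.

Lemma has_sum_abs_bounded F (B : R) :
  (forall S, uniq S -> \sum_(i <- S) normc (F i) <= B) ->
  exists s, has_sum F s /\ normc s <= B.
Proof.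
move=> FB.
(* Split F into the positive and negative parts of its real and imaginary
   parts: nonnegative families with bounded partial sums. *)
pose pos (x : R) := Num.max x 0.
have posE x : x = pos x - pos (- x).
  rewrite /pos; case: (lerP 0 x) => x0.
    by rewrite (@max_r _ _ (- x) 0) ?subr0 // oppr_le0.
  by rewrite (@max_l _ _ (- x) 0) ?sub0r ?opprK // oppr_ge0 ltW.
have pos_ge0 x : 0 <= pos x by rewrite le_max lexx orbT.
have pos_le x y : `|x| <= y -> pos x <= y.
  by move=> xy; rewrite ge_max (le_trans _ xy) ?ler_norm // (le_trans _ xy).
have part (c : R[i] -> R) : (forall x, `|c x| <= normc x) ->
    exists s : R, has_sum (fun i => (pos (c (F i)))%:C) s%:C.
  move=> cF; have [s qs _] := @has_sum_ge0_bounded (fun i => pos (c (F i))) B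
    (fun i => pos_ge0 _)
    (fun S uS => le_trans (ler_sum _ (fun i _ => pos_le _ _ (cF _))) (FB S uS)).
  by exists s.
have normc_ReN (x : R[i]) : `|- complex.Re x| <= normc x by rewrite normrN; apply: normc_Re.
have normc_ImN (x : R[i]) : `|- complex.Im x| <= normc x by rewrite normrN; apply: normc_Im.
have [a1 sa1] := part _ (@normc_Re R).
have [a2 sa2] := part _ normc_ReN.
have [b1 sb1] := part _ (@normc_Im R).
have [b2 sb2] := part _ normc_ImN.
have sF := has_sum_lc 'i%C (has_sum_lc (-1) sb2 sb1) (has_sum_lc (-1) sa2 sa1).
set s := (X in has_sum _ X) in sF.
have {}sF : has_sum F s.
  apply: eq_has_sum sF => i; rewrite /lc.
  rewrite [RHS]complexE [complex.Re (F i) in RHS]posE [complex.Im (F i) in RHS]posE.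
  by rewrite !rmorphB /=; ring.
exists s; split => //; apply/ler_addgt0Pr => e e_gt0.
have [F0 HF0] := (has_sumP _ _).1 sF e e_gt0.
have F0S : {subset F0 <= undup F0} by move=> x; rewrite mem_undup.
have := HF0 _ (undup_uniq F0) F0S.
rewrite -(normcN (_ - s)) opprB => /ltW Fs.
rewrite -[s](subrK (\sum_(i <- undup F0) F i)) addrC.
apply: le_trans (le_normcD _ _) _; rewrite lerD //.
by rewrite (le_trans (normc_sum _ _)) ?FB ?undup_uniq.
Qed.

End HasSum.

Section L2.
Variables (R : realType) (I : choiceType).
Implicit Types (f g h : I -> R[i]) (S : seq I).

Definition sqnorm f : R := complex.Re (ip f f).

Lemma l2E f : l2 f <-> exists s, has_sum (fun i => (normc (f i) ^+ 2)%:C) s.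
Proof.
by split=> [] [s fs]; exists s; apply: eq_has_sum fs => i; rewrite mul_conj_normc.
Qed.

Lemma has_sum_sqnorm f : l2 f ->
  has_sum (fun i => (normc (f i) ^+ 2)%:C) (sqnorm f)%:C.
Proof.
move=> /l2E [s fs]; have [sE _] := has_sum_ge0_le (fun i => sqr_ge0 _) fs.
rewrite /sqnorm /ip (@sumvE _ _ _ s) -?sE //.
by apply: eq_has_sum fs => i; rewrite mul_conj_normc.
Qed.

Lemma ipE_sqnorm f : l2 f -> ip f f = (sqnorm f)%:C.
Proof.
move=> /has_sum_sqnorm fs; apply: sumvE; apply: eq_has_sum fs => i.
by rewrite mul_conj_normc.
Qed.

Lemma sum_le_sqnorm f S : l2 f -> uniq S ->
  \sum_(i <- S) normc (f i) ^+ 2 <= sqnorm f.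
Proof.
move=> /has_sum_sqnorm fs; have [_ +] := has_sum_ge0_le (fun i => sqr_ge0 _) fs.
by move=> /[apply].
Qed.

Lemma sqnorm_ge0 f : l2 f -> 0 <= sqnorm f.
Proof. by move=> lf; have := @sum_le_sqnorm f [::] lf isT; rewrite big_nil. Qed.

Lemma l2_bounded f (B : R) :
  (forall S, uniq S -> \sum_(i <- S) normc (f i) ^+ 2 <= B) -> l2 f /\ sqnorm f <= B.
Proof.
move=> fB; have [s fs sB] := has_sum_ge0_bounded (fun i => sqr_ge0 _) fB.
have lf : l2 f by apply/l2E; exists s%:C.
by split=> //; case: (has_sum_unique fs (has_sum_sqnorm lf)) => <-.
Qed.

Lemma has_sum_mul_AMGM (u v : I -> R[i]) (A B t : R) : 0 < t ->
  (forall S, uniq S -> \sum_(i <- S) normc (u i) ^+ 2 <= A) ->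
  (forall S, uniq S -> \sum_(i <- S) normc (v i) ^+ 2 <= B) ->
  exists s, has_sum (fun i => u i * v i) s /\ normc s <= (t * A + B / t) / 2.
Proof.
move=> t_gt0 uA vB; apply: has_sum_abs_bounded => S uS.
apply: (@le_trans _ _ (\sum_(i <- S) (t * normc (u i) ^+ 2 + normc (v i) ^+ 2 / t) / 2)).
  by apply: ler_sum => i _; rewrite Normc.normcM ler_AMGM.
rewrite -mulr_suml big_split /= -mulr_sumr -mulr_suml ler_pM2r ?invr_gt0 ?ltr0n //.
by rewrite lerD ?ler_pM2l ?ler_pM2r ?invr_gt0 ?uA ?vB.
Qed.

Lemma ip_has_sum_AMGM f g t : l2 f -> l2 g -> 0 < t ->
  has_sum (fun i => f i * (g i)^*) (ip f g) /\
  normc (ip f g) <= (t * sqnorm f + sqnorm g / t) / 2.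
Proof.
move=> lf lg t_gt0.
have gB S : uniq S -> \sum_(i <- S) normc (g i)^* ^+ 2 <= sqnorm g.
  by move=> uS; under eq_bigr do rewrite normc_conj; exact: sum_le_sqnorm.
have [s [fgs sle]] := has_sum_mul_AMGM t_gt0 (fun S => sum_le_sqnorm lf) gB.
by rewrite /ip (sumvE fgs).
Qed.

Lemma ip_has_sum f g : l2 f -> l2 g -> has_sum (fun i => f i * (g i)^*) (ip f g).
Proof. by move=> lf lg; have [] := ip_has_sum_AMGM lf lg ltr01. Qed.

Lemma ip_CauchySchwarz f g : l2 f -> l2 g ->
  normc (ip f g) ^+ 2 <= sqnorm f * sqnorm g.
Proof.
move=> lf lg; apply: sqr_le_of_AMGM; rewrite ?normc_ge0 ?sqnorm_ge0 // => t t_gt0.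
by have [] := ip_has_sum_AMGM lf lg t_gt0.
Qed.

Lemma ip_conjC f g : ip g f = (ip f g)^*.
Proof.
rewrite /ip -sumv_conj; congr sumv; apply: funext => i.
by rewrite rmorphM /= conjCK mulrC.
Qed.

Lemma ip_lcl a f g h : l2 f -> l2 g -> l2 h ->
  ip (lc a f g) h = a * ip f h + ip g h.
Proof.
move=> lf lg lh; apply: sumvE.
apply: eq_has_sum (has_sum_lc a (ip_has_sum lf lh) (ip_has_sum lg lh)) => i.
by rewrite /lc mulrDl mulrA.
Qed.

Lemma ip_lcr a f g h : l2 f -> l2 g -> l2 h ->
  ip h (lc a f g) = a^* * ip h f + ip h g.
Proof.
by move=> lf lg lh; rewrite ip_conjC ip_lcl // rmorphD rmorphM /= -!ip_conjC.
Qed.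

Lemma l2_finsupp f S0 : uniq S0 -> (forall i, i \notin S0 -> f i = 0) -> l2 f.
Proof.
move=> uS0 f0; exists (\sum_(i <- S0) f i * (f i)^*).
by apply: has_sum_finsupp => // i /f0 ->; rewrite mul0r.
Qed.

Definition unitv (k : I) : I -> R[i] := fun i => (i == k)%:R.

Lemma l2_unitv k : l2 (unitv k).
Proof.
by apply: (@l2_finsupp _ [:: k]) => // i; rewrite inE /unitv => /negbTE ->.
Qed.

Lemma ip_unitv f k : ip f (unitv k) = f k.
Proof.
rewrite /ip (sumv_single (k := k)) /unitv ?eqxx ?conjC1 ?mulr1 //.
by move=> i /negbTE ->; rewrite conjC0 mulr0.
Qed.

Definition trunc S f : I -> R[i] := fun i => if i \in S then f i else 0.
Definition tail S f : I -> R[i] := fun i => if i \in S then 0 else f i.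

Lemma l2_trunc S f : uniq S -> l2 (trunc S f).
Proof. by move=> uS; apply: (@l2_finsupp _ S) => // i /negbTE; rewrite /trunc => ->. Qed.

Lemma lc_trunc_tail S f : lc 1 (trunc S f) (tail S f) = f.
Proof.
apply: funext => i; rewrite /lc /trunc /tail mul1r.
by case: (i \in S); rewrite ?addr0 ?add0r.
Qed.

Lemma sqnorm_tail_small f (e : R) : l2 f -> 0 < e ->
  exists S0, [/\ uniq S0, l2 (tail S0 f) & sqnorm (tail S0 f) <= e].
Proof.
move=> lf e_gt0.
have [F0 HF0] := (has_sumP _ _).1 (has_sum_sqnorm lf) e e_gt0.
pose S0 := undup F0; have uS0 : uniq S0 := undup_uniq F0.
have F0S0 : {subset F0 <= S0} by move=> x; rewrite mem_undup.
have := HF0 S0 uS0 F0S0.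
rewrite -rmorph_sum -rmorphB normc_real => /ltr_normlP [+ _].
rewrite opprB ltrBlDl => S0e.
suff [] : l2 (tail S0 f) /\ sqnorm (tail S0 f) <= e by exists S0.
apply: l2_bounded => S uS; pose S' := [seq i <- S | i \notin S0].
have uS0S' : uniq (S0 ++ S').
  rewrite cat_uniq uS0 filter_uniq //= andbT.
  by apply/hasPn => i; rewrite mem_filter => /andP [].
have tailE : \sum_(i <- S) normc (tail S0 f i) ^+ 2 = \sum_(i <- S') normc (f i) ^+ 2.
  rewrite big_filter (bigID (mem S0)) /= big1 ?add0r => [|i iS0].
    by apply: eq_bigr => i /negbTE iS0; rewrite /tail iS0.
  by rewrite /tail iS0 Normc.normc0 expr0n.
have := sum_le_sqnorm lf uS0S'; rewrite big_cat /= tailE => le_sq.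
apply/ltW; rewrite -(ltrD2l (\sum_(i <- S0) normc (f i) ^+ 2)).
exact: le_lt_trans le_sq S0e.
Qed.

Lemma antilinear_bounded_eq0 (L : (I -> R[i]) -> R[i]) :
  (forall a f g, l2 f -> l2 g -> L (lc a f g) = a^* * L f + L g) ->
  (forall k, L (unitv k) = 0) ->
  (exists K : R, forall r, l2 r -> normc (L r) ^+ 2 <= K * sqnorm r) ->
  forall f, l2 f -> L f = 0.
Proof.
move=> Llin Lunit [K LK] f lf.
(* L vanishes on finitely supported vectors and is small on small tails. *)
have l2_0 : l2 (fun _ : I => 0 : R[i]) by apply: (@l2_finsupp _ [::]).
have L0 : L (fun _ => 0) = 0.
  have := Llin 1 _ _ l2_0 l2_0; rewrite conjC1 mul1r.
  have -> : lc 1 (fun _ : I => 0 : R[i]) (fun _ => 0) = (fun _ => 0).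
    by apply: funext => i; rewrite /lc mulr0 addr0.
  by move=> h; apply: (addrI (L (fun _ => 0))); rewrite addr0 -h.
have Ltrunc S : uniq S -> L (trunc S f) = 0.
  elim: S => [_|k S IHS /= /andP [kS uS]].
    by rewrite -L0; congr L; apply: funext => i.
  have -> : trunc (k :: S) f = lc (f k) (unitv k) (trunc S f).
    apply: funext => i; rewrite /trunc /lc /unitv inE.
    by case: (eqVneq i k) => [->|] /=; rewrite ?(negbTE kS) ?mulr1 ?addr0 ?mulr0 ?add0r.
  rewrite Llin; [|exact: l2_unitv|exact: l2_trunc].
  by rewrite Lunit IHS // mulr0 addr0.
apply: normc_small_eq0 => e e_gt0.
have K1_gt0 : 0 < `|K| + 1 by rewrite ltr_wpDl.
have [S0 [uS0 ltail tail_small]] :=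
  sqnorm_tail_small lf (divr_gt0 (exprn_gt0 2 e_gt0) K1_gt0).
rewrite -(lc_trunc_tail S0 f) Llin; [|exact: l2_trunc|exact: ltail].
rewrite Ltrunc // mulr0 add0r.
rewrite -(ltr_pXn2r (n := 2)) ?nnegrE ?normc_ge0 ?ltW //.
apply: (le_lt_trans (LK _ ltail)).
apply: (le_lt_trans (ler_wpM2r (sqnorm_ge0 ltail) (ler_norm K))).
apply: (le_lt_trans (ler_wpM2l (normr_ge0 K) tail_small)).
by rewrite mulrA ltr_pdivrMr // mulrC ltr_pM2l ?exprn_gt0 // ltrDl.
Qed.

End L2.

Section Reindex.
Variable R : realType.

Lemma l2_comp_inj (J I : choiceType) (h : J -> I) (f : I -> R[i]) :
  injective h -> l2 f -> l2 (f \o h) /\ sqnorm (f \o h) <= sqnorm f.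
Proof.
move=> h_inj lf; apply: l2_bounded => S uS.
by rewrite -(big_map h predT (fun i => normc (f i) ^+ 2)) sum_le_sqnorm ?map_inj_uniq.
Qed.

Lemma has_sum_mul_l2 (I : choiceType) (u v : I -> R[i]) : l2 u -> l2 v ->
  exists s, has_sum (fun i => u i * v i) s.
Proof.
move=> lu lv.
have [s [uvs _]] := has_sum_mul_AMGM ltr01 (fun S => sum_le_sqnorm lu)
                                           (fun S => sum_le_sqnorm lv).
by exists s.
Qed.

Lemma has_sum_reindex (J I : choiceType) (h : J -> I) (g : I -> J) (P : pred I)
    (G : I -> R[i]) s :
  injective h -> (forall j, P (h j)) -> {in P, cancel g h} ->
  (forall i, ~~ P i -> G i = 0) ->
  has_sum G s -> has_sum (G \o h) s.
Proof.
move=> h_inj Ph gK G0 /has_sumP Gs; apply/has_sumP => e /Gs [F0 HF0].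
exists (map g (seq.filter P F0)) => S uS F0S.
pose S' := map h S ++ seq.filter (predC P) (undup F0).
have uS' : uniq S'.
  rewrite cat_uniq map_inj_uniq // uS filter_uniq ?undup_uniq // andbT /=.
  apply/hasPn => x; rewrite mem_filter => /andP [/= nPx _].
  by apply/negP => /mapP [j _ xE]; move: nPx; rewrite xE /= Ph.
have F0S' : {subset F0 <= S'}.
  move=> x xF0; rewrite mem_cat; have [Px|nPx] := boolP (P x).
    by rewrite -(gK x Px) map_f // F0S // map_f // mem_filter Px.
  by rewrite mem_filter /= nPx mem_undup xF0 orbT.
have := HF0 S' uS' F0S'; rewrite big_cat big_map /= [X in _ + X - _]big1_seq ?addr0 //.
by move=> i /andP [_]; rewrite mem_filter => /andP [/G0].
Qed.

End Reindex.

Section ToeplitzBounded.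
Variables (R : realType) (d : nat) (phi : zind d -> R[i]).

Definition zind_of (k : mind d) : zind d := [ffun i => (k i)%:Z].
Definition mind_of (n : zind d) : mind d := [ffun i => absz (n i)].
Definition nonneg_zind (n : zind d) : bool := [forall i, 0 <= n i].
Definition zext (f : Hfun R d) : zind d -> R[i] :=
  fun n => if nonneg_zind n then f (mind_of n) else 0.

Lemma zind_of_inj : injective zind_of.
Proof.
by move=> k l /ffunP kl; apply/ffunP => i; have := kl i; rewrite !ffunE => -[].
Qed.

Lemma nonneg_zind_of k : nonneg_zind (zind_of k).
Proof. by apply/forallP => i; rewrite ffunE. Qed.

Lemma mind_ofK : {in nonneg_zind, cancel mind_of zind_of}.
Proof. by move=> n /forallP n_ge0; apply/ffunP => i; rewrite !ffunE gez0_abs. Qed.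

Lemma zext_zind_of f k : zext f (zind_of k) = f k.
Proof.
rewrite /zext nonneg_zind_of; congr f.
by apply/ffunP => i; rewrite !ffunE.
Qed.

Lemma zdiff_zind_of l k : zdiff (zind_of l) (zind_of k) = mdiff l k.
Proof. by apply/ffunP => i; rewrite !ffunE. Qed.

Lemma zdiff_inj (m : zind d) : injective (zdiff m).
Proof.
move=> n1 n2 /ffunP n12; apply/ffunP => i.
by have := n12 i; rewrite !ffunE => /addrI /oppr_inj.
Qed.

Lemma mdiff_inj (l : mind d) : injective (mdiff l).
Proof.
move=> k1 k2 /ffunP k12; apply/ffunP => i.
by have := k12 i; rewrite !ffunE => /addrI /oppr_inj [].
Qed.

Lemma l2_zext f : l2 f -> l2 (zext f) /\ sqnorm (zext f) <= sqnorm f.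
Proof.
move=> lf; apply: l2_bounded => S uS.
rewrite (bigID nonneg_zind) /= [X in _ + X]big1 ?addr0; last first.
  by move=> n /negbTE nn; rewrite /zext nn Normc.normc0 expr0n.
rewrite -big_filter.
have -> : \sum_(n <- seq.filter nonneg_zind S) normc (zext f n) ^+ 2 =
          \sum_(k <- map mind_of (seq.filter nonneg_zind S)) normc (f k) ^+ 2.
  rewrite big_map big_seq [RHS]big_seq; apply: eq_bigr => n.
  by rewrite mem_filter /zext => /andP [-> _].
rewrite sum_le_sqnorm // map_inj_in_uniq ?filter_uniq // => m n.
rewrite !mem_filter => /andP [m_ge0 _] /andP [n_ge0 _] mn.
by rewrite -(mind_ofK m_ge0) mn mind_ofK.
Qed.

Hypothesis phi_Linf : Linf_coeffs phi.

Lemma l2_Linf_coeffs : l2 phi.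
Proof.
have [M /(_ _ (l2_unitv _ [ffun=> 0])) [l2_phi _]] := phi_Linf.
suff -> : phi = laurent phi (unitv _ [ffun=> 0]) by [].
apply: funext => m; rewrite /laurent (sumv_single (k := [ffun=> 0])) /unitv ?eqxx.
  by rewrite mulr1; congr phi; apply/ffunP => i; rewrite !ffunE subr0.
by move=> n /negbTE ->; rewrite mulr0.
Qed.

Lemma toeplitz_has_sum f l : l2 f ->
  has_sum (fun k => phi (mdiff l k) * f k) (toeplitz phi f l).
Proof.
move=> lf; have [l2_phil _] := l2_comp_inj (@mdiff_inj l) l2_Linf_coeffs.
by have [s phifs] := has_sum_mul_l2 l2_phil lf; rewrite /toeplitz (sumvE phifs).
Qed.

Lemma toeplitz_lc a f g : l2 f -> l2 g ->
  toeplitz phi (lc a f g) = lc a (toeplitz phi f) (toeplitz phi g).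
Proof.
move=> lf lg; apply: funext => l; apply: sumvE.
apply: eq_has_sum (has_sum_lc a (toeplitz_has_sum l lf) (toeplitz_has_sum l lg)) => k.
by rewrite /lc mulrDr mulrCA.
Qed.

Lemma toeplitz_laurent f l : l2 f ->
  toeplitz phi f l = laurent phi (zext f) (zind_of l).
Proof.
move=> lf; have [l2_phil _] := l2_comp_inj (@zdiff_inj (zind_of l)) l2_Linf_coeffs.
have [s phifs] := has_sum_mul_l2 l2_phil (l2_zext lf).1.
have G0 n : ~~ nonneg_zind n -> phi (zdiff (zind_of l) n) * zext f n = 0.
  by move=> /negbTE nn; rewrite /zext nn mulr0.
rewrite /laurent (sumvE phifs); apply: sumvE.
apply: eq_has_sum (has_sum_reindex zind_of_inj nonneg_zind_of mind_ofK G0 phifs) => k.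
by rewrite /= zdiff_zind_of zext_zind_of.
Qed.

Lemma toeplitz_bounded : exists2 M : R, 0 <= M &
  forall f, l2 f -> l2 (toeplitz phi f) /\ sqnorm (toeplitz phi f) <= M * sqnorm f.
Proof.
have [M phiM] := phi_Linf; exists (Num.max M 0) => [|f lf].
  by rewrite le_max lexx orbT.
have [l2_zf zf_le] := l2_zext lf; have [l2_L] := phiM _ l2_zf.
rewrite !ipE_sqnorm // -rmorphM lecR => L_le.
have Tf : toeplitz phi f = laurent phi (zext f) \o zind_of.
  by apply: funext => l; rewrite toeplitz_laurent.
have [l2_Tf Tf_le] := l2_comp_inj zind_of_inj l2_L.
rewrite Tf; split => //; apply: (le_trans Tf_le); apply: (le_trans L_le).
apply: (@le_trans _ _ (Num.max M 0 * sqnorm (zext f))).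
  by rewrite ler_wpM2r ?sqnorm_ge0 // le_max lexx.
by rewrite ler_wpM2l // le_max lexx orbT.
Qed.

End ToeplitzBounded.

Lemma normcB_sqr_le (R : realType) (x y : R[i]) :
  normc (x - y) ^+ 2 <= 2 * normc x ^+ 2 + 2 * normc y ^+ 2.
Proof.
have := le_normcD x (- y); rewrite normcN.
have := normc_ge0 (x - y); have := normc_ge0 x; have := normc_ge0 y.
set a := normc x; set b := normc y; set c := normc (x - y) => b0 a0 c0 cab.
have : c ^+ 2 <= (a + b) ^+ 2 by rewrite ler_pXn2r ?nnegrE ?addr_ge0.
have := sqr_ge0 (a - b); nra.
Qed.

Section HardyBasis.
Variables (R : realType) (d : nat).
Implicit Types (f g : Hfun R d) (k l : mind d).

Lemma H2_mono k : H2 (mono R k).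
Proof. exact: l2_unitv. Qed.

Lemma ip_mono f k : ip f (mono R k) = f k.
Proof. exact: ip_unitv. Qed.

Lemma Jcan_mono k : Jcan (mono R k) = mono R k.
Proof. by apply: funext => m; rewrite /Jcan /mono conjC_nat. Qed.

Lemma H2_Jcan f : H2 f -> H2 (Jcan f).
Proof.
by move=> [s fs]; exists s; apply: eq_has_sum fs => k; rewrite /Jcan conjCK mulrC.
Qed.

Lemma ip_Jcan f g : ip (Jcan f) (Jcan g) = ip g f.
Proof.
rewrite ip_conjC /ip -sumv_conj; congr sumv; apply: funext => k.
by rewrite /Jcan rmorphM /= !conjCK.
Qed.

Lemma toeplitz_mono (phi : zind d -> R[i]) k l :
  toeplitz phi (mono R l) k = phi (mdiff k l).
Proof.
rewrite /toeplitz (sumv_single (k := l)) /mono ?eqxx ?mulr1 // => m /negbTE ->.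
by rewrite mulr0.
Qed.

Lemma ip_adjoint_l (U Us : Hfun R d -> Hfun R d) f g :
  is_adjoint U Us -> H2 f -> H2 g -> ip (Us f) g = ip f (U g).
Proof. by move=> [_ Uadj] lf lg; rewrite ip_conjC -Uadj // -ip_conjC. Qed.

Lemma unitary_adjoint (U : Hfun R d -> Hfun R d) : unitary U ->
  exists Us, is_adjoint U Us.
Proof.
move=> [_ _ Uip Uonto]; pose Us g : Hfun R d := fun m => ip g (U (mono R m)).
have UsU h : H2 h -> Us (U h) = h.
  by move=> lh; apply: funext => m; rewrite /Us Uip ?ip_mono //; apply: H2_mono.
exists Us; split=> [g /Uonto [h lh <-] | f g lf /Uonto [h lh <-]]; rewrite UsU //.
exact: Uip.
Qed.

End HardyBasis.

Section CSymmetricToeplitz.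
Variables (R : realType) (d : nat) (phi : zind d -> R[i]) (Cj : Hfun R d -> Hfun R d).
Hypothesis phi_Linf : Linf_coeffs phi.
Hypothesis Cconj : conjugation Cj.
Hypothesis ip_Cj : forall f g, H2 f -> H2 g -> ip (Cj f) (Cj g) = ip g f.

Local Notation T := (toeplitz phi).

Lemma C_symmetric_toeplitz_coeffs : C_symmetric Cj T ->
  forall k l, phi (mdiff k l) = ip (T (Cj (mono R k))) (Cj (mono R l)).
Proof.
case: Cconj => CH _ Cinv _ [S [SH Sadj] CSC] k l.
have zk : H2 (mono R k) by apply: H2_mono.
have zl : H2 (mono R l) by apply: H2_mono.
have Szk : H2 (S (mono R k)) by apply: SH.
have Czk : H2 (Cj (mono R k)) by apply: CH.
rewrite -CSC // Cinv // ip_Cj //.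
by rewrite -Sadj // ip_mono toeplitz_mono.
Qed.

Section FromCoeffs.
Hypothesis coeffs :
  forall k l, phi (mdiff k l) = ip (T (Cj (mono R k))) (Cj (mono R l)).

Lemma CTC_mono l : Cj (T (Cj (mono R l))) = fun k => (phi (mdiff l k))^*.
Proof.
case: Cconj => CH _ Cinv _; have [M _ TM] := toeplitz_bounded phi_Linf.
have TCzl : H2 (T (Cj (mono R l))) by apply: (TM _ (CH _ (H2_mono _ _))).1.
apply: funext => k; have zk : H2 (mono R k) by apply: H2_mono.
have Czk : H2 (Cj (mono R k)) by apply: CH.
rewrite -[LHS]ip_mono -[mono R k]Cinv // ip_Cj //.
by rewrite ip_conjC coeffs.
Qed.

Lemma toeplitz_adjoint_CTC : is_adjoint T (fun g => Cj (T (Cj g))).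
Proof.
case: Cconj => CH Canti Cinv _; have [M M_ge0 TM] := toeplitz_bounded phi_Linf.
have TH f : H2 f -> H2 (T f) by move=> /TM [].
split=> [g lg | f g lf lg]; first by apply/CH/TH/CH.
apply/eqP; rewrite -subr_eq0; apply/eqP; move: g lg.
apply: (antilinear_bounded_eq0 (L := fun g => ip (T f) g - ip f (Cj (T (Cj g))))).
- move=> a g1 g2 lg1 lg2; have Cg1 := CH _ lg1; have Cg2 := CH _ lg2.
  have TCg1 := TH _ Cg1; have TCg2 := TH _ Cg2; have Tf := TH _ lf.
  have CTCg1 := CH _ TCg1; have CTCg2 := CH _ TCg2.
  by rewrite Canti // toeplitz_lc // Canti // conjCK !ip_lcr //; ring.
- move=> l; rewrite -[unitv R l]/(mono R l) ip_mono CTC_mono; apply/eqP.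
  rewrite subr_eq0 /ip /toeplitz; apply/eqP; congr sumv.
  by apply: funext => k; rewrite conjCK mulrC.
exists (2 * (sqnorm (T f) + sqnorm f * M)) => r lr.
apply: le_trans (normcB_sqr_le _ _) _.
have Tr_le : sqnorm (T (Cj r)) <= M * sqnorm r.
  by have [_] := TM _ (CH _ lr); rewrite /sqnorm ip_Cj.
have sqC g : H2 g -> sqnorm (Cj g) = sqnorm g by move=> lg; rewrite /sqnorm ip_Cj.
have TCr : H2 (T (Cj r)) by apply/TH/CH.
rewrite mulrDr mulrDl; apply: lerD.
  by rewrite -mulrA ler_pM2l ?ltr0n //; exact: ip_CauchySchwarz (TH _ lf) lr.
rewrite -!mulrA ler_pM2l ?ltr0n //.
apply: le_trans (ip_CauchySchwarz lf (CH _ TCr)) _.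
by rewrite sqC // ler_wpM2l ?sqnorm_ge0.
Qed.

Lemma toeplitz_coeffs_C_symmetric : C_symmetric Cj T.
Proof.
case: Cconj => CH _ Cinv _; have [M _ TM] := toeplitz_bounded phi_Linf.
exists (fun g => Cj (T (Cj g))); first exact: toeplitz_adjoint_CTC.
by move=> f lf /=; rewrite !Cinv //; apply: (TM _ lf).1.
Qed.

End FromCoeffs.
End CSymmetricToeplitz.

Lemma ip_conjugation_UJ (R : realType) (d : nat) (Cj U : Hfun R d -> Hfun R d) :
  unitary U -> (forall f, H2 f -> Cj f = U (Jcan f)) ->
  forall f g, H2 f -> H2 g -> ip (Cj f) (Cj g) = ip g f.
Proof.
move=> [_ _ Uip _] CUJ f g lf lg.
by rewrite !CUJ // Uip ?ip_Jcan //; apply: H2_Jcan.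
Qed.

Theorem theorem7p5 (R : realType) (d : nat) (phi : zind d -> R[i])
    (Cj U : Hfun R d -> Hfun R d) :
  (2 <= d)%N ->
  Linf_coeffs phi ->
  conjugation Cj ->
  unitary U ->
  (forall f, H2 f -> Cj f = U (Jcan f)) ->
  (C_symmetric Cj (toeplitz phi) <->
     (forall k l : mind d,
        phi (mdiff k l) = ip (toeplitz phi (Cj (mono R k))) (Cj (mono R l))))
  /\
  ((forall k l : mind d,
        phi (mdiff k l) = ip (toeplitz phi (Cj (mono R k))) (Cj (mono R l))) <->
     (exists2 Us, is_adjoint U Us &
        forall k l : mind d,
          phi (mdiff k l) = ip (Us (toeplitz phi (U (mono R k)))) (mono R l))).
Proof.
move=> _ phi_Linf Cconj Uunitary CUJ.
have ip_Cj := ip_conjugation_UJ Uunitary CUJ.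
have CjU k : Cj (mono R k) = U (mono R k).
  by rewrite CUJ ?Jcan_mono //; apply: H2_mono.
have [M _ TM] := toeplitz_bounded phi_Linf.
have UsE Us k l : is_adjoint U Us ->
    ip (Us (toeplitz phi (U (mono R k)))) (mono R l) =
    ip (toeplitz phi (U (mono R k))) (U (mono R l)).
  move=> Uadj; apply: ip_adjoint_l => //; last exact: H2_mono.
  by rewrite -CjU; apply: (TM _ _).1; case: Cconj => CH _ _ _; apply/CH/H2_mono.
split; first split.
- exact: C_symmetric_toeplitz_coeffs.
- exact: toeplitz_coeffs_C_symmetric.
split=> [coeffs | [Us Uadj coeffsU] k l].
- have [Us Uadj] := unitary_adjoint Uunitary.
  by exists Us => // k l; rewrite UsE // -!CjU.
- by rewrite coeffsU UsE // !CjU.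
Qed.
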